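(* Let $m\ge2$ and work either in the PNS or in the PNGS setting described in the context. Let $\mathbb S^m\supset p^{m-1}\supset\cdots\supset p^1\supset p^0$ be a family of backward nested subspheres, i.e. $p^{l}\in P_l$ for $l=0,\ldots,m-1$, $p^{m-1}\in S_{\mathbb S^m}$ and $p^{l-1}\in S_{p^l}$ for $l=1,\ldots,m-1$. Then for all $0\le j'<j\le m-1$, $$\pi_{p^j,p^{j'}}\circ\pi_{\mathbb S^m,p^j}=\pi_{\mathbb S^m,p^{j'}}$$ (at every point of $\mathbb S^m$ where these maps are defined).
   Context: Notation: $\|\cdot\|$ Euclidean/Frobenius norm; $O(k,n)=\{v\in\mathbb R^{n\times k}:v^Tv=I_k\}$; $O(k)$ orthogonal group; $\mathbb D^k$ open unit ball and $\mathbb S^{k-1}$ unit sphere in $\mathbb R^k$. For $j\in\{1,\ldots,m-1\}$, PNS: $M_j=\{\binom{v}{\alpha^T}: v\in O(m-j,m+1),\alpha\in\mathbb D^{m-j}\}$; PNGS: same with $\alpha=0$. For $j=0$: $M_0=\{\binom{v}{\alpha^T}: v\in O(m,m+1),\alpha\in\mathbb S^{m-1}\}$. $P_j=M_j/O(m-j)$ (right action $z\mapsto zR$), with orbits $[z]$. An element $[\binom{v}{\alpha^T}]\in P_j$, $j\ge1$, represents the $j$-dimensional subsphere $\{x\in\mathbb S^m: v^Tx=\alpha\}$, and for $j=0$ the point $v\alpha$. $P_m=\{\mathbb S^m\}$ and $S_{\mathbb S^m}=P_{m-1}$. Nesting: for $p=[\binom{v}{\alpha^T}]\in P_j$ with $2\le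 j\le m-1$, $S_p$ is the set of all $[\binom{v\ \ v_{m-j+1}}{\alpha^T\ \ \alpha_{m-j+1}}]$ with $v_{m-j+1}\in\mathbb S^m$, $v^Tv_{m-j+1}=0$ and $\alpha_{m-j+1}\in\mathbb R$, $\alpha_{m-j+1}^2<1-\|\alpha\|^2$ (PNS) resp. $\alpha_{m-j+1}=0$ (PNGS); for $j=1$ the same with the condition $\alpha_m^2=1-\|\alpha\|^2$ instead. Projection onto $p=[\binom{v}{\alpha^T}]\in P_j$ ($0\le j\le m-1$): $\pi_{\mathbb S^m,p}(q)=v\alpha+\sqrt{1-\|\alpha\|^2}\,\frac{(I_{m+1}-vv^T)q}{\|(I_{m+1}-vv^T)q\|}$, defined whenever $(I_{m+1}-vv^T)q\neq0$ and independent of the representative (for $j=0$ this is the constant $v\alpha$). The same definitions with $m$ replaced by any $j$ give subspheres and projections $\pi_{\mathbb S^j,\cdot}$ for $\mathbb S^j\subset\mathbb R^{j+1}$. For $p^j=[\binom{v}{\alpha^T}]\in P_j$ choose $\tilde v\in O(j+1,m+1)$ with $(v,\tilde v)\in O(m+1)$ and define $g_{p^j,\mathbb S^j}:p^j\to\mathbb S^j$, $y\mapsto \tilde v^Ty/\|\tilde v^Ty\|$, a bijection with inverse $z\mapsto v\alpha+\sqrt{1-\|\alpha\|^2}\,\tilde vz$. For a subsphere $p^{j'}\subset p^j$ of the nested family, $p'_{j'}:=g_{p^j,\mathbb S^j}(p^{j'})$ is a $j'$-dimensional subsphere of $\mathbb S^j$, and $\pi_{p^j,p^{j'}}:=g_{p^j,\mathbb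 S^j}^{-1}\circ\pi_{\mathbb S^j,p'_{j'}}\circ g_{p^j,\mathbb S^j}:p^j\to p^{j'}$ (independent of the choice of $\tilde v$). *)

From HB Require Import structures.
From mathcomp Require Import all_boot all_order all_algebra.
From mathcomp Require Import reals.
Set Implicit Arguments. Unset Strict Implicit. Unset Printing Implicit Defensive.
Import Order.TTheory GRing.Theory Num.Theory.
Local Open Scope ring_scope.

Inductive setting := PNS | PNGS.

Section Defs.
Variable R : realType.

Definition csq n (x : 'cV[R]_n) : R := \sum_(i < n) x i 0 ^+ 2.
Definition rsq n (a : 'rV[R]_n) : R := \sum_(i < n) a 0 i ^+ 2.
Definition cnorm n (x : 'cV[R]_n) : R := Num.sqrt (csq x).
Definition unitS n (x : 'cV[R]_n) := csq x = 1.

(* A representative (v, alpha^T) for a subsphere of S^n in R^(n+1)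
   cut out by k equations: v : (n+1) x k, alpha^T : 1 x k.
   Its dimension is j = n - k. *)
Definition Rep n k := ('M[R]_(n.+1, k) * 'rV[R]_k)%type.

Definition orthocols a b (v : 'M[R]_(a, b)) := v^T *m v = 1%:M.

(* z in M_j (j = n - k, so j = 0 iff k = n) *)
Definition inM (s : setting) n k (z : Rep n k) :=
  orthocols z.1 /\
  (if k == n then rsq z.2 = 1
   else match s with PNS => rsq z.2 < 1 | PNGS => z.2 = 0 end).

Definition orbit n k (z z' : Rep n k) :=
  exists Q : 'M[R]_k, orthocols Q /\ z' = (z.1 *m Q, z.2 *m Q).

(* An element of P_j, represented as the set of its representatives (an orbit) *)
Definition isP s n k (p : Rep n k -> Prop) :=
  exists z, inM s z /\ forall z', p z' <-> orbit z z'.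

Definition inS s n k (p : Rep n k -> Prop) (q : Rep n k.+1 -> Prop) :=
  exists z, p z /\ exists (v' : 'cV[R]_n.+1) (a : R),
    csq v' = 1 /\ z.1^T *m v' = 0 /\
    (if k.+1 == n then a ^+ 2 = 1 - rsq z.2
     else match s with PNS => a ^+ 2 < 1 - rsq z.2 | PNGS => a = 0 end) /\
    forall z', q z' <->
      orbit (castmx (erefl n.+1, addn1 k) (row_mx z.1 v'),
             castmx (erefl 1%N, addn1 k) (row_mx z.2 a%:M)) z'.

Definition subsph n k (z : Rep n k) (x : 'cV[R]_n.+1) :=
  if k == n then x = z.1 *m z.2^T
  else unitS x /\ z.1^T *m x = z.2^T.

Definition proj n k (z : Rep n k) (q : 'cV[R]_n.+1) : 'cV[R]_n.+1 :=
  let r := q - z.1 *m z.1^T *m q in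
  z.1 *m z.2^T + (Num.sqrt (1 - rsq z.2) / cnorm r) *: r.

Definition proj_def n k (z : Rep n k) (q : 'cV[R]_n.+1) :=
  k = n \/ q - z.1 *m z.1^T *m q != 0.

(* g_{p^j, S^j} for p^j = [z] in S^n (z : Rep n k, j = n - k), given vt = \tilde v *)
Definition gmap n k (vt : 'M[R]_(n.+1, (n - k).+1)) (y : 'cV[R]_n.+1)
  : 'cV[R]_(n - k).+1 :=
  (cnorm (vt^T *m y))^-1 *: (vt^T *m y).

Definition ginv n k (z : Rep n k) (vt : 'M[R]_(n.+1, (n - k).+1))
  (w : 'cV[R]_(n - k).+1) : 'cV[R]_n.+1 :=
  z.1 *m z.2^T + Num.sqrt (1 - rsq z.2) *: (vt *m w).

End Defs.

(* On a subsphere {x : |x| = 1, V^T x = a} with centre c = V a and radius rho,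
   the projection of q is the unique maximiser of x |-> <x, q>: writing x = c + e
   with V^T e = 0 and |e| = rho gives <x, q> = <c, q> + <e, r> for
   r = q - V V^T q, and Cauchy-Schwarz bounds <e, r> by rho |r|, with equality
   iff e = (rho / |r|) r.  On p^j the chart g is affine,
   <y, q> = <c, q> + rho <g y, vt^T q>, and g (pi_{p^j} q) is a positive multiple
   of vt^T q.  Hence maximising <., q> over p^j' inside p^j amounts to maximising
   <., g (pi_{p^j} q)> over g (p^j'), whose maximiser is the projection in S^j. *)

From Pilot Require Import Defs.
From HB Require Import structures.
From mathcomp Require Import all_boot all_order all_algebra.
From mathcomp Require Import reals ring.
Import Order.TTheory GRing.Theory Num.Theory.
Local Open Scope ring_scope.
Set Implicit Arguments. Unset Strict Implicit.

Section Dot.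
Variable R : comPzRingType.

Definition dot n (x y : 'cV[R]_n) : R := (x^T *m y) 0 0.

Lemma dotE n (x y : 'cV[R]_n) : dot x y = \sum_i x i 0 * y i 0.
Proof. by rewrite /dot mxE; apply: eq_bigr => i _; rewrite mxE. Qed.

Lemma dotC n (x y : 'cV[R]_n) : dot x y = dot y x.
Proof. by rewrite !dotE; apply: eq_bigr => i _; rewrite mulrC. Qed.

Lemma dot0r n (x : 'cV[R]_n) : dot x 0 = 0.
Proof. by rewrite /dot mulmx0 mxE. Qed.

Lemma dotDr n (x y w : 'cV[R]_n) : dot w (x + y) = dot w x + dot w y.
Proof. by rewrite /dot mulmxDr mxE. Qed.

Lemma dotZr n a (x w : 'cV[R]_n) : dot w (a *: x) = a * dot w x.
Proof. by rewrite /dot -scalemxAr mxE. Qed.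

Lemma dotBr n (x y w : 'cV[R]_n) : dot w (x - y) = dot w x - dot w y.
Proof. by rewrite dotDr -scaleN1r dotZr mulN1r. Qed.

Lemma dot0l n (x : 'cV[R]_n) : dot 0 x = 0.
Proof. by rewrite dotC dot0r. Qed.

Lemma dotDl n (x y w : 'cV[R]_n) : dot (x + y) w = dot x w + dot y w.
Proof. by rewrite dotC dotDr !(dotC w). Qed.

Lemma dotBl n (x y w : 'cV[R]_n) : dot (x - y) w = dot x w - dot y w.
Proof. by rewrite dotC dotBr !(dotC w). Qed.

Lemma dotZl n a (x w : 'cV[R]_n) : dot (a *: x) w = a * dot x w.
Proof. by rewrite dotC dotZr dotC. Qed.

Lemma dot_mulmxl n k (A : 'M[R]_(n, k)) x y : dot (A *m x) y = dot x (A^T *m y).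
Proof. by rewrite /dot trmx_mul mulmxA. Qed.

Lemma dot_mulmxr n k (A : 'M[R]_(n, k)) x y : dot y (A *m x) = dot (A^T *m y) x.
Proof. by rewrite dotC dot_mulmxl dotC. Qed.

End Dot.

Section DotReal.
Variable R : realDomainType.

Lemma dot_ge0 n (x : 'cV[R]_n) : 0 <= dot x x.
Proof. by rewrite dotE sumr_ge0 // => i _; rewrite -expr2 sqr_ge0. Qed.

Lemma dot_eq0 n (x : 'cV[R]_n) : (dot x x == 0) = (x == 0).
Proof.
apply/idP/eqP => [|->]; last by rewrite dot0l.
rewrite dotE psumr_eq0 => [/allP x0|i _]; last by rewrite -expr2 sqr_ge0.
apply/matrixP => i j; rewrite (ord1 j) mxE; apply/eqP.
by rewrite -sqrf_eq0 expr2; apply: x0; rewrite mem_index_enum.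
Qed.

Lemma dot_gt0 n (x : 'cV[R]_n) : (0 < dot x x) = (x != 0).
Proof. by rewrite lt0r dot_eq0 dot_ge0 andbT. Qed.

Lemma dot_leif n (e r : 'cV[R]_n) t : 0 < t -> dot e e = t ^+ 2 * dot r r ->
  dot e r <= t * dot r r ?= iff (e == t *: r).
Proof.
move=> t_gt0 ee.
have sq : dot (e - t *: r) (e - t *: r) = 2 * t * (t * dot r r - dot e r).
  by rewrite dotBl !dotBr !dotZl !dotZr ee (dotC r e); ring.
have t2_gt0 : 0 < 2 * t by rewrite mulr_gt0.
split; first by rewrite -subr_ge0 -(pmulr_rge0 _ t2_gt0) -sq dot_ge0.
by rewrite -[e == _]subr_eq0 -dot_eq0 sq mulf_eq0 (gt_eqF t2_gt0) subr_eq0 eq_sym.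
Qed.

End DotReal.

Section Norms.
Variable R : realType.

Lemma csq_dot n (x : 'cV[R]_n) : csq x = dot x x.
Proof. by rewrite dotE; apply: eq_bigr => i _; rewrite expr2. Qed.

Lemma rsq_dot n (a : 'rV[R]_n) : rsq a = dot a^T a^T.
Proof. by rewrite dotE; apply: eq_bigr => i _; rewrite !mxE expr2. Qed.

Lemma cnorm_sq n (x : 'cV[R]_n) : cnorm x ^+ 2 = dot x x.
Proof. by rewrite /cnorm sqr_sqrtr csq_dot ?dot_ge0. Qed.

Lemma cnorm_gt0 n (x : 'cV[R]_n) : x != 0 -> 0 < cnorm x.
Proof. by move=> x0; rewrite /cnorm sqrtr_gt0 csq_dot dot_gt0. Qed.

End Norms.

Section Representatives.
Variable R : realType.

Lemma orthocols_square m n (A : 'M[R]_(m, n)) :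
  m = n -> orthocols A -> A *m A^T = 1%:M.
Proof. by move=> mn; case: n / mn A => A /mulmx1C. Qed.

Lemma orthocols_compl m k l (V : 'M[R]_(m, k)) (W : 'M[R]_(m, l)) :
  (k + l = m)%N -> orthocols V -> orthocols W -> V^T *m W = 0 ->
  V *m V^T + W *m W^T = 1%:M.
Proof.
move=> klm VO WO VW.
have WV : W^T *m V = 0 by rewrite -[W^T *m V]trmxK trmx_mul trmxK VW trmx0.
have := @orthocols_square _ _ (row_mx V W) (esym klm).
rewrite tr_row_mx mul_row_col => -> //.
by rewrite /orthocols tr_row_mx mul_col_row VO WO VW WV -scalar_mx_block.
Qed.

Lemma rsq_orthocols k (a : 'rV[R]_k) (Q : 'M[R]_k) :
  orthocols Q -> rsq (a *m Q) = rsq a.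
Proof.
move=> QO; rewrite !rsq_dot trmx_mul dot_mulmxl trmxK mulmxA.
by rewrite orthocols_square // mul1mx.
Qed.

Lemma inM_rsq_lt1 s n k (z : Rep R n k) : inM s z -> k != n -> rsq z.2 < 1.
Proof.
case=> _ + /negbTE kn; rewrite kn; case: s => [//|->].
by rewrite rsq_dot trmx0 dot0l ltr01.
Qed.

Lemma orbit_inM s n k (z z' : Rep R n k) : Defs.orbit z z' -> inM s z -> inM s z'.
Proof.
case=> Q [QO ->] [zO zM]; split.
  by rewrite /orthocols /= trmx_mul -mulmxA (mulmxA z.1^T) zO mul1mx.
move: zM => /=; case: ifP => _; first by rewrite rsq_orthocols.
by case: s => [|->]; [rewrite rsq_orthocols | rewrite mul0mx].
Qed.

Lemma orbit_subsph n k (z z' : Rep R n k) x :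
  Defs.orbit z z' -> subsph z x <-> subsph z' x.
Proof.
case=> Q [QO ->]; have QQ := orthocols_square (erefl k) QO.
rewrite /subsph /= !trmx_mul; case: ifP => _.
  by rewrite mulmxA -(mulmxA z.1) QQ mulmx1.
split=> -[xS zx]; split=> //; first by rewrite -mulmxA zx.
by rewrite -[z.1^T *m x]mul1mx -QQ -mulmxA (mulmxA Q^T) zx mulmxA QQ mul1mx.
Qed.

Lemma isP_inM s n k (p : Rep R n k -> Prop) z : isP s p -> p z -> inM s z.
Proof. by case=> c [cM pE] /pE cz; apply: orbit_inM cz cM. Qed.

Lemma isP_subsph s n k (p : Rep R n k -> Prop) z z' x :
  isP s p -> p z -> p z' -> subsph z x <-> subsph z' x.
Proof.
case=> c [_ pE] /pE cz /pE cz'.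
by rewrite -(orbit_subsph x cz) (orbit_subsph x cz').
Qed.

Lemma subsph_extend n k N (e : (k + 1 = N)%N) (z : Rep R n k)
    (v : 'cV[R]_n.+1) (a : R) x :
  orthocols z.1 -> z.1^T *m v = 0 -> csq v = 1 ->
  (N == n -> a ^+ 2 = 1 - rsq z.2) -> k != n ->
  subsph (castmx (erefl n.+1, e) (row_mx z.1 v),
          castmx (erefl 1%N, e) (row_mx z.2 a%:M)) x -> subsph z x.
Proof.
case: N / e => zO zv v1 a2 /negbTE kn; rewrite /subsph /= !castmx_id kn.
case: ifP => [/a2 {}a2 ->|_ [xS]]; last first.
  by rewrite !tr_row_mx mul_col_mx => /eq_col_mx[].
rewrite tr_row_mx mul_row_col tr_scalar_mx mul_mx_scalar; split; last first.
  by rewrite mulmxDr mulmxA zO mul1mx -scalemxAr zv scaler0 addr0.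
rewrite /unitS csq_dot dotDl !dotDr !dotZl !dotZr dot_mulmxl mulmxA zO mul1mx.
rewrite -rsq_dot (dotC v) !dot_mulmxl zv !dot0r -csq_dot v1.
by rewrite !mulr0 addr0 add0r mulr1 -expr2 a2 addrCA subrr addr0.
Qed.

Lemma subsph_nested s m (p : forall k, Rep R m k -> Prop) k j z zj x :
  (forall k, (1 <= k <= m)%N -> isP s (p k)) ->
  (forall k, (1 <= k < m)%N -> inS s (p k) (p k.+1)) ->
  (1 <= k <= j)%N -> (j <= m)%N -> p k z -> p j zj ->
  subsph zj x -> subsph z x.
Proof.
move=> pP pS /andP[k1 kj]; elim: j kj zj => [|j IH] kj zj jm pz pzj xj.
  by move: k1; rewrite leqNgt (leq_ltn_trans kj).
case: (ltngtP k j.+1) kj => // [kj _|kj _]; last first.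
  by subst k; apply/(isP_subsph x (pP j.+1 _) pz pzj) => //; rewrite k1.
have j1 : (1 <= j)%N := leq_trans k1 kj.
have [z0 [pz0 [v [a [v1 [z0v [a2 pjE]]]]]]] : inS s (p j) (p j.+1).
  by apply: pS; rewrite j1.
have [z0O _] : inM s z0 by apply: isP_inM pz0; apply: pP; rewrite j1 ltnW.
have x0 := (orbit_subsph x ((pjE zj).1 pzj)).2 xj.
apply: (IH kj z0 (ltnW jm) pz pz0 (subsph_extend z0O z0v v1 _ _ x0)).
- by move=> /eqP jm'; move: a2; rewrite jm' eqxx.
- by rewrite ltn_eqF.
Qed.

End Representatives.

Section Projection.
Variables (R : realType) (s : setting) (n k : nat) (z : Rep R n k) (q : 'cV[R]_n.+1).
Hypotheses (zM : inM s z) (qD : proj_def z q).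

Let c := z.1 *m z.2^T.
Let r := q - z.1 *m z.1^T *m q.
Let t := Num.sqrt (1 - rsq z.2) / cnorm r.

Let zO : orthocols z.1. Proof. by case: zM. Qed.

Let tr_r : z.1^T *m r = 0.
Proof. by rewrite mulmxBr !mulmxA zO mul1mx subrr. Qed.

Let tr_c : z.1^T *m c = z.2^T.
Proof. by rewrite mulmxA zO mul1mx. Qed.

Let dot_cc : dot c c = rsq z.2.
Proof. by rewrite dot_mulmxl tr_c rsq_dot. Qed.

Let dot_perp y : z.1^T *m y = 0 -> dot y q = dot y r.
Proof.
move=> y0; rewrite -[in LHS](subrK (z.1 *m z.1^T *m q) q) dotDr -mulmxA.
by rewrite dot_mulmxr y0 dot0l addr0 mulmxA.
Qed.

Let proj_affine : proj z q = c + t *: r. Proof. by []. Qed.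

Let r_neq0 : k != n -> r != 0.
Proof. by case: qD => // -> /[!eqxx]. Qed.

Let t_gt0 : k != n -> 0 < t.
Proof.
move=> kn; rewrite divr_gt0 ?cnorm_gt0 ?r_neq0 //.
by rewrite sqrtr_gt0 subr_gt0 (inM_rsq_lt1 zM).
Qed.

Let t_dot_rr : k != n -> t ^+ 2 * dot r r = 1 - rsq z.2.
Proof.
move=> kn; rewrite -cnorm_sq -exprMn divfK ?gt_eqF ?cnorm_gt0 ?r_neq0 //.
by rewrite sqr_sqrtr // subr_ge0 ltW // (inM_rsq_lt1 zM).
Qed.

Let proj_center : k = n -> proj z q = c.
Proof.
case: zM => _ + /eqP kn; rewrite kn /proj => ->.
by rewrite subrr sqrtr0 mul0r scale0r addr0.
Qed.

Lemma subsph_proj : subsph z (proj z q).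
Proof.
rewrite /subsph; case: eqP => [/proj_center//|/eqP kn]; split.
  rewrite /unitS csq_dot proj_affine dotDl !dotDr !dotZl !dotZr dot_cc.
  rewrite (dotC r c) dot_mulmxl tr_r dot0r !mulr0 !addr0 add0r mulrA -expr2.
  by rewrite t_dot_rr // addrCA subrr addr0.
by rewrite proj_affine mulmxDr tr_c -scalemxAr tr_r scaler0 addr0.
Qed.

Lemma subsph_dot_leif x :
  subsph z x -> dot x q <= dot (proj z q) q ?= iff (x == proj z q).
Proof.
rewrite /subsph; case: eqP => [kn -> | /eqP kn [x1 xc]].
  by rewrite proj_center //; apply/leif_refl; rewrite eqxx.
set e := x - c; have tr_e : z.1^T *m e = 0 by rewrite mulmxBr xc tr_c subrr.
have ee : dot e e = t ^+ 2 * dot r r.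
  rewrite t_dot_rr // /e dotBl !dotBr dot_cc (dotC c x) dot_mulmxr xc -rsq_dot.
  by rewrite -csq_dot x1 subrr subr0.
have -> : x = c + e by rewrite addrC subrK.
clearbody e; have [le eq] := dot_leif (t_gt0 kn) ee.
rewrite proj_affine !dotDl dotZl (dot_perp tr_e) (dot_perp tr_r).
by split; rewrite ?lerD2l // (inj_eq (addrI _)) eq (inj_eq (addrI _)).
Qed.

End Projection.

Section Chart.
Variables (R : realType) (s : setting) (n k : nat) (z : Rep R n k).
Variable vt : 'M[R]_(n.+1, (n - k).+1).
Hypotheses (zM : inM s z) (kn : (k < n)%N).
Hypotheses (vtO : orthocols vt) (zvt : z.1^T *m vt = 0).

Let c := z.1 *m z.2^T.
Let rho := Num.sqrt (1 - rsq z.2).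

Let rho_gt0 : 0 < rho.
Proof. by rewrite sqrtr_gt0 subr_gt0 (inM_rsq_lt1 zM) ?ltn_eqF. Qed.

Let vtz : vt^T *m z.1 = 0.
Proof. by rewrite -[LHS]trmxK trmx_mul trmxK zvt trmx0. Qed.

Let decomp (y : 'cV[R]_n.+1) : y = z.1 *m (z.1^T *m y) + vt *m (vt^T *m y).
Proof.
rewrite !mulmxA -mulmxDl orthocols_compl ?mul1mx //; last by case: zM.
by rewrite addnS subnKC // ltnW.
Qed.

Let subsph_lt y : subsph z y -> unitS y /\ z.1^T *m y = z.2^T.
Proof. by rewrite /subsph ltn_eqF. Qed.

Let gmap_subsph y : subsph z y -> gmap (k:=k) vt y = rho^-1 *: (vt^T *m y).
Proof.
move=> /subsph_lt[y1 zy]; congr (_^-1 *: _); rewrite /cnorm csq_dot.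
rewrite dot_mulmxl trmxK (_ : vt *m _ = y - c); last first.
  by rewrite {2}(decomp y) zy addrC addKr.
by rewrite dotBr -csq_dot y1 dot_mulmxr zy -rsq_dot.
Qed.

Lemma ginv_gmap y : subsph z y -> ginv z vt (gmap (k:=k) vt y) = y.
Proof.
move=> zy; rewrite gmap_subsph // /ginv -scalemxAr scalerA divff ?gt_eqF //.
by rewrite scale1r -(proj2 (subsph_lt zy)) -decomp.
Qed.

Let dot_subsph y q :
  subsph z y -> dot y q = dot c q + rho * dot (gmap (k:=k) vt y) (vt^T *m q).
Proof.
move=> zy; rewrite {1}(decomp y) (proj2 (subsph_lt zy)) dotDl.
rewrite gmap_subsph // dotZl mulrA divff ?gt_eqF // mul1r.
by rewrite [dot (vt *m _) _]dot_mulmxl.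
Qed.

Let gmap_proj q : proj_def z q ->
  exists2 lam, 0 < lam & gmap (k:=k) vt (proj z q) = lam *: (vt^T *m q).
Proof.
move=> qD; set r := q - z.1 *m z.1^T *m q.
have r_neq0 : r != 0 by case: qD => // kn'; move: kn; rewrite kn' ltnn.
have vtr : vt^T *m r = vt^T *m q by rewrite mulmxBr !mulmxA vtz !mul0mx subr0.
have vtq : vt^T *m q != 0.
  apply: contraNneq r_neq0 => vtq0.
  by rewrite /r {1}(decomp q) vtq0 mulmx0 addr0 mulmxA subrr.
set a := rho / cnorm r.
have a_gt0 : 0 < a by rewrite divr_gt0 ?cnorm_gt0.
exists ((cnorm (a *: (vt^T *m q)))^-1 * a).
  by rewrite mulr_gt0 // invr_gt0 cnorm_gt0 // scaler_eq0 negb_or gt_eqF.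
have vtp : vt^T *m proj z q = a *: (vt^T *m q).
  by rewrite /proj -/r -/a mulmxDr mulmxA vtz mul0mx add0r -scalemxAr vtr.
by rewrite /gmap vtp scalerA.
Qed.

Lemma ler_dot_gmap q y y' : proj_def z q -> subsph z y -> subsph z y' ->
  (dot y q <= dot y' q) =
  (dot (gmap (k:=k) vt y) (gmap (k:=k) vt (proj z q)) <=
   dot (gmap (k:=k) vt y') (gmap (k:=k) vt (proj z q))).
Proof.
move=> /gmap_proj[lam lam_gt0 ->] zy zy'.
rewrite (dot_subsph q zy) (dot_subsph q zy') lerD2l ler_pM2l //.
by rewrite !dotZr ler_pM2l.
Qed.

End Chart.

Unset Implicit Arguments. Set Strict Implicit.

Theorem proposition2p5 (R : realType) (s : setting) (m : nat)
  (p : forall k : nat, Rep R m k -> Prop) :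
  (2 <= m)%N ->
  (forall k : nat, (1 <= k <= m)%N -> isP s (p k)) ->
  (forall k : nat, (1 <= k < m)%N -> inS s (p k) (p k.+1)) ->
  forall k k' : nat, (1 <= k)%N -> (k < k')%N -> (k' <= m)%N ->
  forall (z : Rep R m k) (z2 : Rep R m k')
         (vt : 'M[R]_(m.+1, (m - k).+1)) (w : Rep R (m - k) (k' - k))
         (q : 'cV[R]_m.+1),
    p k z -> p k' z2 ->
    orthocols vt -> z.1^T *m vt = 0 ->
    inM PNS w ->
    (forall x, subsph w x <-> exists y, subsph z2 y /\ x = gmap (k:=k) vt y) ->
    unitS q ->
    proj_def z q -> proj_def w (gmap (k:=k) vt (proj z q)) -> proj_def z2 q ->
    ginv z vt (proj w (gmap (k:=k) vt (proj z q))) = proj z2 q.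
Proof.
(* [2 <= m] follows from [1 <= k < k' <= m], and the projections do not need
   [q] on the sphere. *)
move=> _ pP pS k k' k1 kk' k'm z z2 vt w q pz pz2 vtO zvt wM wE _ zq wq z2q.
have km : (k < m)%N := leq_trans kk' k'm.
have zM : inM s z by apply: isP_inM pz; apply: pP; rewrite k1 ltnW.
have z2M : inM s z2.
  by apply: isP_inM pz2; apply: pP; rewrite (leq_trans k1 (ltnW kk')).
have z2z x : subsph z2 x -> subsph z x.
  by apply: (subsph_nested pP pS _ k'm pz pz2); rewrite k1 ltnW.
have [y [y2 yE]] := (wE _).1 (subsph_proj wM wq).
rewrite yE (ginv_gmap zM km vtO zvt (z2z _ y2)).
apply/eqP; rewrite -(ge_leif (subsph_dot_leif z2M z2q y2)).
have p2 := subsph_proj z2M z2q.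
rewrite (ler_dot_gmap zM km vtO zvt zq (z2z _ p2) (z2z _ y2)) -yE.
apply: Order.le_of_leif (subsph_dot_leif wM wq _).
by apply/wE; exists (proj z2 q).
Qed.
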